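(* Let $G$ be a connected graph with at least one edge. Then $\mathrm{ldim}_f(K_2\square G)\leq \mathrm{ldim}_f(G)$.
   Context: All graphs are finite, simple and connected; $d$ is the shortest-path distance. For an edge $uv$ of a graph $X$, $L_X(uv)=\{x\in V(X): d_X(u,x)\neq d_X(v,x)\}$. A function $f:V(X)\to[0,1]$ is a local resolving function of $X$ if $\sum_{x\in L_X(uv)}f(x)\geq 1$ for every edge $uv$; $\mathrm{ldim}_f(X)$ is the minimum of $\sum_{v}f(v)$ over all local resolving functions. $K_2$ is the complete graph on two vertices. The Cartesian product $G\square H$ has vertex set $V(G)\times V(H)$, with $(u_1,v_1)$ adjacent to $(u_2,v_2)$ iff ($u_1u_2\in E(G)$ and $v_1=v_2$) or ($u_1=u_2$ and $v_1v_2\in E(H)$). *)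

From Stdlib Require Import Reals ClassicalEpsilon.
From mathcomp Require Import all_boot.
Set Implicit Arguments. Unset Strict Implicit. Unset Printing Implicit Defensive.

Definition simple_graph (T : finType) (e : rel T) : Prop :=
  symmetric e /\ irreflexive e.

Definition connected_graph (T : finType) (e : rel T) : Prop :=
  forall x y : T, connect e x y.

Fixpoint within (T : finType) (e : rel T) (k : nat) (x y : T) : bool :=
  match k with
  | 0 => x == y
  | k'.+1 => within e k' x y || [exists z, within e k' x z && e z y]
  end.

(* Shortest-path distance: least k with a walk of length <= k
   (for connected graphs this is < #|T|). *)
Definition gdist (T : finType) (e : rel T) (x y : T) : nat :=
  find (fun k => within e k x y) (iota 0 #|T|).

Definition Lset (T : finType) (e : rel T) (u v : T) : pred T :=
  fun x => gdist e u x != gdist e v x.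

Definition Rsum (T : finType) (P : pred T) (f : T -> R) : R :=
  \big[Rplus/R0]_(x | P x) f x.

Definition local_resolving_function (T : finType) (e : rel T) (f : T -> R) : Prop :=
  (forall x, Rle R0 (f x) /\ Rle (f x) R1) /\
  (forall u v, e u v -> Rle R1 (Rsum (Lset e u v) f)).

Definition is_glb (S : R -> Prop) (m : R) : Prop :=
  (forall s, S s -> Rle m s) /\
  (forall b, (forall s, S s -> Rle b s) -> Rle b m).

(* ldim_f(X): the minimum (= infimum, which is attained) of sum_v f(v)
   over all local resolving functions f of X. *)
Definition ldimf (T : finType) (e : rel T) : R :=
  epsilon (inhabits R0)
    (is_glb (fun s => exists f, local_resolving_function e f /\
                                s = Rsum predT f)).

(* Cartesian product K_2 □ G, vertex set bool * T (bool = V(K_2)). *)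
Definition K2_prod_rel (T : finType) (e : rel T) : rel (bool * T) :=
  fun p q => ((p.1 != q.1) && (p.2 == q.2)) || ((p.1 == q.1) && e p.2 q.2).

From Stdlib Require Import Reals Lra ClassicalEpsilon.
From mathcomp Require Import all_boot zify.
From HB Require Import structures.

Set Implicit Arguments.
Unset Strict Implicit.
Unset Printing Implicit Defensive.

(* In K_2 □ G the distance is d((a,x),(b,y)) = [a != b] + d_G(x,y).  Hence a
   local resolving function f of G, copied onto the layer {true} x V(G) and
   set to 0 on the other layer, resolves K_2 □ G with the same weight: a vertex
   (true,z) separates an edge (a,x)(a,y) inside a layer iff z separates xy in
   G, and it separates every edge (false,x)(true,x) between the layers, so
   those edges receive at least the weight f gives to L_G(uv) for any edge uv
   of G.  Every value of the minimisation for G is thus one for K_2 □ G. *)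

Section Distance.
Variables (T : finType) (e : rel T).

Lemma within_S k x y : within e k x y -> within e k.+1 x y.
Proof. by move=> h /=; rewrite h. Qed.

Lemma within_mono k m x y : k <= m -> within e k x y -> within e m x y.
Proof.
elim: m => [|m IH]; first by rewrite leqn0 => /eqP ->.
rewrite leq_eqVlt => /orP [/eqP <- //| hk] h.
exact/within_S/IH.
Qed.

Lemma within_step k x z y : within e k x z -> e z y -> within e k.+1 x y.
Proof. by move=> hxz hzy /=; apply/orP; right; apply/existsP; exists z; rewrite hxz. Qed.

Lemma path_within x p : path e x p -> within e (size p) x (last x p).
Proof.
elim/last_ind: p => [|p z IH] //=.
rewrite rcons_path size_rcons last_rcons => /andP [hp hz].
exact: within_step (IH hp) hz.
Qed.

Lemma connect_within x y : connect e x y -> exists2 k, k < #|T| & within e k x y.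
Proof.
move=> /connectP [p hp ->]; have [p' hp' hu _] := shortenP hp.
exists (size p'); last exact: path_within.
by have := max_card (mem (x :: p')); rewrite (card_uniqP hu).
Qed.

Lemma gdist_spec x y : (exists2 k, k < #|T| & within e k x y) ->
  [/\ gdist e x y < #|T|, within e (gdist e x y) x y &
      forall j, j < gdist e x y -> ~~ within e j x y].
Proof.
move=> [k hk hw].
have hhas : has (fun k => within e k x y) (iota 0 #|T|).
  by apply/hasP; exists k; rewrite ?mem_iota.
have hlt : gdist e x y < #|T| by rewrite /gdist -{2}(size_iota 0 #|T|) -has_find.
split=> //; first by have := nth_find 0 hhas; rewrite nth_iota.
move=> j hj; have := before_find 0 hj.
by rewrite nth_iota ?add0n ?(ltn_trans hj hlt) // => ->.
Qed.

Lemma gdist_eq x y k : k < #|T| -> within e k x y ->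
  (forall j, j < k -> ~~ within e j x y) -> gdist e x y = k.
Proof.
move=> hk hw hmin; have [h1 h2 h3] := gdist_spec (ex_intro2 _ _ k hk hw).
case: (ltngtP (gdist e x y) k) => // h.
  by move: (hmin _ h); rewrite h2.
by move: (h3 _ h); rewrite hw.
Qed.

Lemma gdist_eq0 x y : connect e x y -> (gdist e x y == 0) = (x == y).
Proof.
move=> /connect_within hxy; have [hlt hw _] := gdist_spec hxy.
apply/eqP/eqP => [h0 | exy]; first by move: hw; rewrite h0 => /eqP.
by subst y; apply: gdist_eq => //=; apply: leq_ltn_trans hlt.
Qed.

End Distance.

Section K2Product.
Variables (T : finType) (e : rel T).
Local Notation E := (K2_prod_rel e).

Lemma within_K2_prod k a x b y :
  within E k (a, x) (b, y) = ((a != b) <= k) && within e (k - (a != b)) x y.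
Proof.
elim: k a x b y => [|k IH] a x b y; first by case: a; case: b.
apply/idP/idP.
- have hab := leq_b1 (a != b); rewrite (leq_trans hab) //=.
  move=> /orP [|/existsP [[c z] /andP []]].
    by rewrite IH => /andP [_ hw]; apply: within_mono hw; lia.
  rewrite IH /K2_prod_rel /= => /andP [hk hw] /orP [/andP [_ /eqP <-]|/andP [/eqP <- hzy]].
    by apply: within_mono hw; have := leq_b1 (a != c); lia.
  by rewrite subSn //; exact: within_step hw hzy.
- case: (eqVneq a b) => [<-|hab] /=; rewrite ?subn0 ?subn1.
    move=> /orP [hw|/existsP [z /andP [hw hzy]]].
      by apply: within_S; rewrite IH eqxx subn0.
    apply: (@within_step _ _ k _ (a, z)); first by rewrite IH eqxx subn0.
    by rewrite /K2_prod_rel /= eqxx hzy orbT.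
  move=> hw; apply: (@within_step _ _ k _ (a, y)); first by rewrite IH eqxx subn0.
  by rewrite /K2_prod_rel /= hab eqxx.
Qed.

Lemma gdist_K2_prod a x b y : connect e x y ->
  gdist E (a, x) (b, y) = (a != b) + gdist e x y.
Proof.
move=> /connect_within /gdist_spec [hlt hw hmin].
have hab := leq_b1 (a != b).
apply: gdist_eq.
- by rewrite card_prod card_bool; lia.
- by rewrite within_K2_prod leq_addr addKn.
- move=> j hj; rewrite within_K2_prod; apply/negP => /andP [hk hw'].
  by move: (hmin (j - (a != b))); rewrite hw' => /(_ _) /negP; apply; lia.
Qed.

End K2Product.

Lemma RplusA : associative Rplus.
Proof. by move=> *; rewrite Rplus_assoc. Qed.

HB.instance Definition _ :=
  Monoid.isComLaw.Build R R0 Rplus RplusA Rplus_comm Rplus_0_l.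

Section Rsum.
Variable T : finType.
Implicit Types (P Q : pred T) (f : T -> R).

Lemma Rsum_ge0 P f : (forall x, Rle R0 (f x)) -> Rle R0 (Rsum P f).
Proof.
move=> hf; apply: (big_ind (Rle R0)) => //; first exact: Rle_refl.
by move=> a b ha hb; lra.
Qed.

Lemma Rsum_le_subset P Q f : (forall x, P x -> Q x) -> (forall x, Rle R0 (f x)) ->
  Rle (Rsum P f) (Rsum Q f).
Proof.
move=> hPQ hf; rewrite /Rsum (big_mkcond P) (big_mkcond Q).
apply: (big_ind2 Rle); [lra | by move=> * /=; lra | move=> x _].
case: (boolP (P x)) => hP; first by rewrite hPQ //; lra.
by case: (Q x); [apply: hf | lra].
Qed.

Lemma Rsum_ge_term P f u : P u -> (forall x, Rle R0 (f x)) -> Rle (f u) (Rsum P f).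
Proof.
move=> hu hf; rewrite /Rsum (bigD1 u) //=.
have := Rsum_ge0 (fun x => P x && (x != u)) hf; rewrite /Rsum; lra.
Qed.

End Rsum.

Definition K2_lift (T : finType) (f : T -> R) (p : bool * T) : R :=
  if p.1 then f p.2 else R0.

Lemma Rsum_K2_lift (T : finType) (P : pred (bool * T)) (f : T -> R) :
  Rsum P (K2_lift f) = Rsum (fun z => P (true, z)) f.
Proof.
pose F b z := if P (b, z) then K2_lift f (b, z) else R0.
rewrite /Rsum big_mkcond [RHS]big_mkcond (eq_bigr (fun p => F p.1 p.2)); last by case.
rewrite -pair_bigA big_bool /= [X in Rplus _ X]big1 ?Rplus_0_r //.
by move=> z _; rewrite /F; case: ifP.
Qed.

Section Resolving.
Variables (T : finType) (e : rel T).
Hypothesis e_connected : connected_graph e.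
Local Notation E := (K2_prod_rel e).

Lemma ones_resolving : irreflexive e -> local_resolving_function e (fun _ => R1).
Proof.
move=> hirr; split=> [x | x y hxy]; first lra.
apply: Rle_trans (Rsum_ge_term (u := x) _ _); [lra | | by move=> _; lra].
apply/negP => /eqP hd.
have /eqP hyx : y == x.
  by rewrite -(gdist_eq0 (e_connected y x)) -hd (gdist_eq0 (e_connected x x)).
by move: hxy; rewrite hyx hirr.
Qed.

Lemma Lset_K2_layer a x y z : Lset E (a, x) (a, y) (true, z) = Lset e x y z.
Proof. by rewrite /Lset !(gdist_K2_prod _ _ (e_connected _ _)) eqn_add2l. Qed.

Lemma Lset_K2_rung a b x z : a != b -> Lset E (a, x) (b, x) (true, z).
Proof. by rewrite /Lset !(gdist_K2_prod _ _ (e_connected _ _)) eqn_add2r; case: a; case: b. Qed.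

Lemma K2_lift_resolving f : (exists u v, e u v) ->
  local_resolving_function e f -> local_resolving_function E (K2_lift f).
Proof.
move=> [u [v huv]] [hf01 hfL].
have hf0 z : Rle R0 (f z) by have [] := hf01 z.
split=> [[[] z] | [a x] [b y]]; [exact: hf01 | rewrite /K2_lift /=; lra |].
rewrite /K2_prod_rel Rsum_K2_lift /= => /orP [/andP [hab /eqP <-] | /andP [/eqP <- hxy]].
  apply: Rle_trans (hfL _ _ huv) (Rsum_le_subset _ hf0) => z _.
  exact: Lset_K2_rung hab.
by apply: Rle_trans (hfL _ _ hxy) _; rewrite /Rsum (eq_bigl _ _ (Lset_K2_layer a x y)); lra.
Qed.

End Resolving.

Definition ldim_values (T : finType) (e : rel T) (s : R) : Prop :=
  exists f, local_resolving_function e f /\ s = Rsum predT f.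

Section Infimum.
Local Open Scope R_scope.

Lemma glb_exists (S : R -> Prop) (b : R) :
  (exists s, S s) -> (forall s, S s -> b <= s) -> exists m, is_glb S m.
Proof.
move=> [s0 hs0] hb.
have hbound : bound (fun x => S (- x)) by exists (- b) => x /hb; lra.
have hne : exists x, S (- x) by exists (- s0); rewrite Ropp_involutive.
have [m [hm1 hm2]] := completeness _ hbound hne.
exists (- m); split=> [s hs | c hc].
  suff : - s <= m by lra.
  by apply: hm1; rewrite Ropp_involutive.
suff : m <= - c by lra.
by apply: hm2 => x /hc; lra.
Qed.

Lemma is_glb_le (S S' : R -> Prop) m m' :
  is_glb S m -> is_glb S' m' -> (forall s, S' s -> S s) -> Rle m m'.
Proof. by move=> [hm _] [_ hm'] hS'S; apply: hm' => s /hS'S /hm. Qed.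

End Infimum.

Lemma ldimf_glb (T : finType) (e : rel T) (f : T -> R) :
  local_resolving_function e f -> is_glb (ldim_values e) (ldimf e).
Proof.
move=> hf; apply: epsilon_spec; apply: (glb_exists (b := R0)).
  by exists (Rsum predT f), f.
move=> _ [g [[hg _] ->]]; apply: Rsum_ge0 => x; by have [] := hg x.
Qed.

Theorem lemma3p9 (T : finType) (e : rel T) :
  simple_graph e -> connected_graph e -> (exists u v : T, e u v) ->
  Rle (ldimf (K2_prod_rel e)) (ldimf e).
Proof.
move=> [_ hirr] hconn hedge.
have ones := ones_resolving hconn hirr.
have lift := K2_lift_resolving hconn hedge.
apply: is_glb_le (ldimf_glb (lift _ ones)) (ldimf_glb ones) _.
move=> _ [f [hf ->]]; exists (K2_lift f); split; first exact: lift.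
by rewrite Rsum_K2_lift.
Qed.
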